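(* Let $I$ be a fuzzy implication and $N$ a strong fuzzy negation. Define $$I^{lc}_{I,N}(x,y)=\begin{cases}I(x,y)& y\ge N(x)\\ I(N(y),N(x))&\text{otherwise}\end{cases},\qquad I^{uc}_{I,N}(x,y)=\begin{cases}I(x,y)& y\le N(x)\\ I(N(y),N(x))&\text{otherwise}\end{cases},$$ and for a fuzzy implication $J$ let $A_J(a,b)=\inf\{c\in[0,1]\mid J(a,c)\ge b\}$. Then $A_{I^{lc}_{I,N}}(N(b),I^{lc}_{I,N}(a,b))\le N(a)$ and $A_{I^{uc}_{I,N}}(N(b),I^{uc}_{I,N}(a,b))\le N(a)$ for all $a,b\in[0,1]$.
   Context: A fuzzy implication is $I:[0,1]^2\to[0,1]$, non-increasing in the first and non-decreasing in the second variable, with $I(0,0)=I(1,1)=1$ and $I(1,0)=0$. A fuzzy negation is a non-increasing $N:[0,1]\to[0,1]$ with $N(0)=1$, $N(1)=0$; it is strong if $N(N(x))=x$ for all $x$. *)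

From HB Require Import structures.
From mathcomp Require Import all_boot all_order all_algebra.
From mathcomp Require Import boolp classical_sets reals.
Set Implicit Arguments. Unset Strict Implicit. Unset Printing Implicit Defensive.
Import Order.TTheory GRing.Theory Num.Theory.
Local Open Scope ring_scope.
Local Open Scope classical_set_scope.

Section Fuzzy.
Variable R : realType.

Definition in01 (x : R) : Prop := 0 <= x <= 1.

(* fuzzy implication I : [0,1]^2 -> [0,1] (represented as R -> R -> R,
   only values on [0,1]^2 matter) *)
Definition fuzzy_implication (I : R -> R -> R) : Prop :=
  (forall x y, in01 x -> in01 y -> in01 (I x y)) /\
  (forall x1 x2 y, in01 x1 -> in01 x2 -> in01 y -> x1 <= x2 -> I x2 y <= I x1 y) /\
  (forall x y1 y2, in01 x -> in01 y1 -> in01 y2 -> y1 <= y2 -> I x y1 <= I x y2) /\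
  I 0 0 = 1 /\ I 1 1 = 1 /\ I 1 0 = 0.

Definition fuzzy_negation (N : R -> R) : Prop :=
  (forall x, in01 x -> in01 (N x)) /\
  (forall x y, in01 x -> in01 y -> x <= y -> N y <= N x) /\
  N 0 = 1 /\ N 1 = 0.

Definition strong_negation (N : R -> R) : Prop :=
  fuzzy_negation N /\ (forall x, in01 x -> N (N x) = x).

Definition I_lc (I : R -> R -> R) (N : R -> R) (x y : R) : R :=
  if N x <= y then I x y else I (N y) (N x).

Definition I_uc (I : R -> R -> R) (N : R -> R) (x y : R) : R :=
  if y <= N x then I x y else I (N y) (N x).

Definition A_op (J : R -> R -> R) (a b : R) : R :=
  inf [set c : R | in01 c /\ b <= J a c].

End Fuzzy.

(* Since N is an involution, both I^lc and I^uc satisfy the contrapositive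
   symmetry J(N y, N x) = J(x, y), whatever I is.  Hence c = N a belongs to
   the set {c | J(N b, c) >= J(a, b)} whose infimum is A_J(N b, J(a, b)). *)
From mathcomp Require Import all_boot all_order all_algebra.
From mathcomp Require Import boolp classical_sets reals.
Import Order.TTheory GRing.Theory Num.Theory.
Local Open Scope ring_scope.
Local Open Scope classical_set_scope.

Lemma A_op_le (R : realType) (J : R -> R -> R) (a b c : R) :
  in01 c -> b <= J a c -> A_op J a b <= c.
Proof.
move=> c01 bJ; apply: ge_inf => //.
by exists 0 => x [/andP[]].
Qed.

Section Contrapositive.
Variables (R : realType) (I : R -> R -> R) (N : R -> R) (a b : R).
Hypotheses (NNa : N (N a) = a) (NNb : N (N b) = b).

Lemma I_lc_contrapositive : I_lc I N (N b) (N a) = I_lc I N a b.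
Proof. by rewrite /I_lc NNa NNb; case: ltgtP => // ->; rewrite NNa. Qed.

Lemma I_uc_contrapositive : I_uc I N (N b) (N a) = I_uc I N a b.
Proof. by rewrite /I_uc NNa NNb; case: ltgtP => // <-; rewrite NNa. Qed.

End Contrapositive.

Theorem theorem5p11 (R : realType) (I : R -> R -> R) (N : R -> R) :
  fuzzy_implication I -> strong_negation N ->
  forall a b : R, in01 a -> in01 b ->
    A_op (I_lc I N) (N b) (I_lc I N a b) <= N a /\
    A_op (I_uc I N) (N b) (I_uc I N a b) <= N a.
Proof.
move=> _ [[N01 _] NN] a b a01 b01.
split; apply: A_op_le (N01 a a01) _.
- by rewrite I_lc_contrapositive ?NN.
- by rewrite I_uc_contrapositive ?NN.
Qed.
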